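(* Let $\alpha$ be an infinite permutation with $p_{\alpha}(n)=n$ for all $n\ge1$. Then the underlying word $s$ of $\alpha$ is either ultimately periodic or Sturmian.
   Context: An infinite permutation is an equivalence class of sequences of pairwise distinct reals under $a\sim b\iff(a[i]<a[j]\Leftrightarrow b[i]<b[j]\ \forall i,j)$; write $\alpha=(\alpha[n])_{n\ge0}$ with the induced order. $p_\alpha(n)$ is the number of distinct factors $\alpha[i..i+n-1]$ of length $n$, each regarded as a finite permutation (relative order). The underlying word of $\alpha$ is the infinite binary word $s=s[0]s[1]\cdots$ with $s[i]=0$ if $\alpha[i]<\alpha[i+1]$ and $s[i]=1$ otherwise. An infinite word is ultimately periodic if it equals $vwww\cdots$ for finite words $v,w$ with $w$ nonempty. An infinite word $u$ is Sturmian if it is not ultimately periodic and has exactly $n+1$ distinct factors (blocks of consecutive letters) of length $n$ for every $n\ge1$. *)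

From Stdlib Require Import Reals.
From HB Require Import structures.
From mathcomp Require Import all_boot all_order all_algebra.
From mathcomp Require Import boolp.
From mathcomp Require Import Rstruct.
Set Implicit Arguments. Unset Strict Implicit. Unset Printing Implicit Defensive.
Import Order.TTheory GRing.Theory Num.Theory.
Local Open Scope ring_scope.

(* An infinite permutation is represented by a sequence a : nat -> R of
   pairwise distinct reals (injective a); all notions below depend only on
   the relative order, i.e. on the equivalence class. *)

(* The factor alpha[i..i+n-1], regarded as a finite permutation (relative
   order): the table of comparisons a[i+j] < a[i+k] for j,k < n. *)
Definition perm_factor (a : nat -> R) (i n : nat) : {ffun 'I_n * 'I_n -> bool} :=
  [ffun jk : 'I_n * 'I_n => a (i + jk.1)%N < a (i + jk.2)%N].

Definition perm_complexity (a : nat -> R) (n : nat) : nat :=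
  #|[set p : {ffun 'I_n * 'I_n -> bool} | `[< exists i, p = perm_factor a i n >] ]|.

Definition underlying_word (a : nat -> R) : nat -> bool :=
  fun i => ~~ (a i < a i.+1).

Definition word_factor (s : nat -> bool) (i n : nat) : {ffun 'I_n -> bool} :=
  [ffun j : 'I_n => s (i + j)%N].

Definition word_complexity (s : nat -> bool) (n : nat) : nat :=
  #|[set w : {ffun 'I_n -> bool} | `[< exists i, w = word_factor s i n >] ]|.

(* s = v w w w ... with w nonempty. *)
Definition ultimately_periodic (s : nat -> bool) : Prop :=
  exists (v w : seq bool), (0 < size w)%N /\
    forall i : nat,
      s i = if (i < size v)%N then nth false v i
            else nth false w ((i - size v) %% size w).

Definition sturmian (s : nat -> bool) : Prop :=
  ~ ultimately_periodic s /\
  forall n : nat, (1 <= n)%N -> word_complexity s n = n.+1.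

From Stdlib Require Import Reals.
From mathcomp Require Import all_boot all_order all_algebra.
From mathcomp Require Import Rstruct.
From mathcomp Require Import boolp zify.
Set Implicit Arguments. Unset Strict Implicit. Unset Printing Implicit Defensive.

(* The factor of length n of the underlying word at position i is read off
   the factor of length n+1 of the permutation at i, so the word complexity at
   n is at most p(n+1) = n+1.  Conversely, by Morse-Hedlund, a word that is not
   ultimately periodic has at least n+1 factors of length n: if the complexity
   did not grow from n to n+1, every factor of length n would have a unique
   right extension, and a repeated factor would then force periodicity. *)

Definition word_factors (s : nat -> bool) (n : nat) : {set {ffun 'I_n -> bool}} :=
  [set w | `[< exists i, w = word_factor s i n >] ].

Lemma word_complexityE s n : word_complexity s n = #|word_factors s n|.
Proof. by []. Qed.

Lemma mem_word_factors s n i : word_factor s i n \in word_factors s n.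
Proof. by rewrite inE; apply/asboolP; exists i. Qed.

Lemma word_factorsP s n w :
  w \in word_factors s n -> exists i, w = word_factor s i n.
Proof. by rewrite inE => /asboolP. Qed.

Definition ffun_prefix n (w : {ffun 'I_n.+1 -> bool}) : {ffun 'I_n -> bool} :=
  [ffun j => w (widen_ord (leqnSn n) j)].

Lemma ffun_prefix_word_factor s i n :
  ffun_prefix (word_factor s i n.+1) = word_factor s i n.
Proof. by apply/ffunP => j; rewrite !ffunE. Qed.

Lemma ffun_prefix_word_factors s n :
  @ffun_prefix n @: word_factors s n.+1 = word_factors s n.
Proof.
apply/setP => w; apply/idP/idP.
- by case/imsetP => x /word_factorsP [i ->] ->;
    rewrite ffun_prefix_word_factor mem_word_factors.
- case/word_factorsP => i ->; rewrite -ffun_prefix_word_factor.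
  exact/imset_f/mem_word_factors.
Qed.

Lemma word_complexity_leSn s n : word_complexity s n <= word_complexity s n.+1.
Proof.
by rewrite !word_complexityE -{1}ffun_prefix_word_factors leq_imset_card.
Qed.

Lemma ultimately_periodic_shift s i0 d :
  0 < d -> (forall k, s (i0 + k) = s (i0 + d + k)) -> ultimately_periodic s.
Proof.
move=> d_gt0 per.
have per_mul q r : s (i0 + r + q * d) = s (i0 + r).
  elim: q r => [|q IHq] r; first by rewrite mul0n addn0.
  have -> : i0 + r + q.+1 * d = i0 + d + (r + q * d) by rewrite mulSn; lia.
  by rewrite -per addnA IHq.
exists (mkseq s i0), (mkseq (fun r => s (i0 + r)) d).
rewrite size_mkseq d_gt0; split=> // i; rewrite size_mkseq.
case: ltnP => hi; first by rewrite nth_mkseq.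
rewrite nth_mkseq ?ltn_pmod //.
by rewrite -(per_mul ((i - i0) %/ d)) -addnA (addnC _ (_ * d)) -divn_eq subnKC.
Qed.

Lemma exists_repeated_word_factor s n :
  exists x y, x < y /\ word_factor s x n = word_factor s y n.
Proof.
pose h (i : 'I_(2 ^ n).+1) := word_factor s i n.
have [[i [j [/eqP neq_ij eq_h]]] | ] :=
  pselect (exists i j : 'I_(2 ^ n).+1, i != j /\ h i = h j); last first.
  move=> no_repeat; suff /leq_card : injective h.
    by rewrite card_ffun card_bool !card_ord ltnn.
  move=> x y hxy; apply/eqP/negPn/negP => neq_xy.
  by apply: no_repeat; exists x, y.
have [lt_ij | lt_ji | /val_inj //] := ltngtP i j.
- by exists i, j.
- by exists j, i.
Qed.

Section DeterminedExtension.

Variables (s : nat -> bool) (n : nat).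
Hypothesis determined : forall i j,
  word_factor s i n = word_factor s j n -> s (i + n) = s (j + n).

Lemma eq_word_factorS i j :
  word_factor s i n = word_factor s j n ->
  word_factor s i.+1 n = word_factor s j.+1 n.
Proof.
move=> eq_ij; apply/ffunP => k; rewrite !ffunE !addSnnS.
have [lt_kn | ge_kn] := ltnP k.+1 n.
  by move/ffunP: eq_ij => /(_ (Ordinal lt_kn)); rewrite !ffunE.
have -> : k.+1 = n by apply/eqP; rewrite eqn_leq ltn_ord ge_kn.
exact: determined.
Qed.

Lemma ultimately_periodic_of_determined : ultimately_periodic s.
Proof.
have [x [y [lt_xy eq_xy]]] := exists_repeated_word_factor s n.
have eq_shift k : word_factor s (x + k) n = word_factor s (y + k) n.
  by elim: k => [|k IHk]; rewrite ?addn0 // !addnS; apply: eq_word_factorS.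
apply: (@ultimately_periodic_shift s (x + n) (y - x)); first by rewrite subn_gt0.
move=> k; have -> : x + n + (y - x) + k = y + k + n by lia.
by rewrite addnAC; apply: determined.
Qed.

End DeterminedExtension.

Lemma ultimately_periodic_of_word_complexity_eq s n :
  word_complexity s n.+1 = word_complexity s n -> ultimately_periodic s.
Proof.
move=> eq_c; apply: (@ultimately_periodic_of_determined s n) => i j eq_ij.
have inj_prefix : {in word_factors s n.+1 &, injective (@ffun_prefix n)}.
  by apply/imset_injP/eqP; rewrite ffun_prefix_word_factors; apply/esym/eq_c.
have := inj_prefix _ _ (mem_word_factors s n.+1 i) (mem_word_factors s n.+1 j).
rewrite !ffun_prefix_word_factor => /(_ eq_ij) /ffunP /(_ ord_max).
by rewrite !ffunE.
Qed.

Lemma word_complexity_gtn s :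
  ~ ultimately_periodic s -> forall n, n < word_complexity s n.
Proof.
move=> not_up; elim=> [|n IHn].
  by apply/card_gt0P; exists (word_factor s 0 0); apply: mem_word_factors.
have := word_complexity_leSn s n; rewrite leq_eqVlt => /orP [/eqP eq_c | lt_c].
  by case: not_up; apply: (@ultimately_periodic_of_word_complexity_eq s n).
exact: leq_ltn_trans IHn lt_c.
Qed.

Definition descent_pattern n (p : {ffun 'I_n.+1 * 'I_n.+1 -> bool}) :
  {ffun 'I_n -> bool} :=
  [ffun j : 'I_n => ~~ p (widen_ord (leqnSn n) j, lift ord0 j)].

Lemma word_complexity_le_perm_complexity a n :
  word_complexity (underlying_word a) n <= perm_complexity a n.+1.
Proof.
apply: leq_trans (leq_imset_card (@descent_pattern n) _).
apply/subset_leq_card/subsetP => _ /word_factorsP [i ->]; apply/imsetP.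
exists (perm_factor a i n.+1); first by rewrite inE; apply/asboolP; exists i.
by apply/ffunP => j; rewrite !ffunE /= /underlying_word addnS.
Qed.

Theorem proposition5 (a : nat -> R) (a_inj : injective a)
  (hp : forall n : nat, (1 <= n)%N -> perm_complexity a n = n) :
  ultimately_periodic (underlying_word a) \/ sturmian (underlying_word a).
Proof.
have [up | not_up] := pselect (ultimately_periodic (underlying_word a)).
  by left.
right; split=> // n _; apply/eqP; rewrite eqn_leq; apply/andP; split.
- by rewrite -(hp n.+1) // word_complexity_le_perm_complexity.
- exact: word_complexity_gtn.
Qed.
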